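(* Let $\mathbb{R}^n_s$ be $\mathbb{R}^n$ with a non-degenerate symmetric bilinear form $\langle\cdot,\cdot\rangle$ of signature $(n-s,s)$, let $G\subset\mathrm{Iso}(\mathbb{R}^n_s)$ be a real Zariski-closed subgroup whose centralizer in $\mathrm{Iso}(\mathbb{R}^n_s)$ acts transitively on $\mathbb{R}^n$, and let $\mathfrak{g}$ be its Lie algebra with the symmetric bilinear form $(\cdot,\cdot)$ induced by the orbit metric. Assume there exist $Z\in[\mathfrak{g},\mathfrak{g}]$ and $Z^*\in\mathfrak{g}$ with $(Z,Z^* )\neq0$. Then $Z^*\notin\mathfrak{z}(\mathfrak{g})$.
   Context: Elements of $\mathfrak{g}$ are written $(A,v)$ (matrices $\begin{pmatrix}A&v\\0&0\end{pmatrix}$). For fixed $p\in\mathbb{R}^n$, the orbit metric form on $\mathfrak{g}$ is $(X,Y)=\langle A_Xp+v_X,\,A_Yp+v_Y\rangle$, i.e. the pullback of $\langle\cdot,\cdot\rangle$ on the orbit $G.p$ via the orbit map; it satisfies $([X,Y],Z)=-(Y,[X,Z])$. $\mathfrak{z}(\mathfrak{g})$ denotes the center of $\mathfrak{g}$. *)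

From HB Require Import structures.
From mathcomp Require Import all_boot all_order all_algebra.
From mathcomp Require Import all_classical all_reals all_analysis.
Unset Printing Implicit Defensive.
Import Order.TTheory GRing.Theory Num.Theory.
Import numFieldNormedType.Exports.
Local Open Scope ring_scope.

Section Defs.
Context {R : realType}.

Definition eta_form (n s : nat) : 'M[R]_n :=
  diag_mx (\row_(i < n) (if (i < n - s)%N then 1 else -1)).

Definition ip (n s : nat) (x y : 'cV[R]_n) : R :=
  ((x^T *m eta_form n s *m y) ord0 ord0).

(* Affine maps x |-> A x + v as (n+1)x(n+1) matrices [A v; 0 1]. *)
Definition ext {n : nat} (x : 'cV[R]_n) : 'cV[R]_(n + 1) := col_mx x 1%:M.

Definition act {n : nat} (M : 'M[R]_(n + 1)) (x : 'cV[R]_n) : 'cV[R]_n :=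
  usubmx (M *m ext x).

Definition isIso (n s : nat) (M : 'M[R]_(n + 1)) : Prop :=
  [/\ dlsubmx M = 0, drsubmx M = 1%:M &
      (ulsubmx M)^T *m eta_form n s *m ulsubmx M = eta_form n s].

Inductive mxpoly_expr (m : nat) : Type :=
  | PConst of R
  | PVar of 'I_m & 'I_m
  | PAdd of mxpoly_expr m & mxpoly_expr m
  | PMul of mxpoly_expr m & mxpoly_expr m.

Fixpoint peval {m : nat} (f : mxpoly_expr m) (M : 'M[R]_m) : R :=
  match f with
  | PConst c => c
  | PVar i j => M i j
  | PAdd f g => peval f M + peval g M
  | PMul f g => peval f M * peval g M
  end.

Definition zariski_closed_subgroup (n s : nat) (G : 'M[R]_(n + 1) -> Prop) :
  Prop :=
  [/\ (forall M, G M -> isIso n s M),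
      G 1%:M,
      (forall M N, G M -> G N -> G (M *m N)),
      (forall M, G M -> G (invmx M)) &
      exists F : mxpoly_expr (n + 1) -> Prop,
        forall M, G M <-> (forall f, F f -> peval f M = 0)].

Definition centralizer_Iso (n s : nat) (G : 'M[R]_(n + 1) -> Prop)
  (h : 'M[R]_(n + 1)) : Prop :=
  isIso n s h /\ forall M, G M -> h *m M = M *m h.

Definition centralizer_transitive (n s : nat) (G : 'M[R]_(n + 1) -> Prop) :
  Prop :=
  forall x y : 'cV[R]_n, exists h, centralizer_Iso n s G h /\ act h x = y.

(* Lie algebra of a closed matrix group: tangent vectors at 1 of curves in G
   (entrywise differentiable at 0). *)
Definition lie_alg {m : nat} (G : 'M[R]_m -> Prop) (X : 'M[R]_m) : Prop :=
  exists c : R -> 'M[R]_m,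
    [/\ forall t, G (c t), c 0 = 1%:M &
        forall i j, is_derive (0 : R) (1 : R) (fun t => c t i j) (X i j)].

Definition lie_br {m : nat} (X Y : 'M[R]_m) : 'M[R]_m := X *m Y - Y *m X.

Definition derived_alg {m : nat} (g : 'M[R]_m -> Prop) (Z : 'M[R]_m) : Prop :=
  exists l : seq (R * 'M[R]_m * 'M[R]_m),
    (forall t, t \in l -> g t.1.2 /\ g t.2) /\
    Z = \sum_(t <- l) t.1.1 *: lie_br t.1.2 t.2.

Definition center_alg {m : nat} (g : 'M[R]_m -> Prop) (Z : 'M[R]_m) : Prop :=
  g Z /\ forall X, g X -> lie_br X Z = 0.

(* orbit metric form at p: (X,Y) = <A_X p + v_X, A_Y p + v_Y> *)
Definition orbit_form (n s : nat) (p : 'cV[R]_n) (X Y : 'M[R]_(n + 1)) : R :=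
  ip n s (act X p) (act Y p).

End Defs.

From HB Require Import structures.
From mathcomp Require Import all_boot all_order all_algebra.
From mathcomp Require Import all_classical all_reals all_analysis.
From mathcomp Require Import lra.
Import Order.TTheory GRing.Theory Num.Theory.
Local Open Scope ring_scope.

Set Implicit Arguments.
Unset Strict Implicit.
Unset Printing Implicit Defensive.

(** The orbit form is ad-invariant, ([W,X],Y) + (X,[W,Y]) = 0 on g, so for
   Z = sum a_i [X_i,Y_i] and a central Z' we get
   (Z,Z') = - sum a_i (Y_i,[X_i,Z']) = 0.  Ad-invariance splits into two
   identities.  First, the linear parts of elements of g are skew for the form
   of signature (n-s,s), because G consists of isometries.  Second, an element
   of the centralizer moving p to q commutes with g and is an isometry, so the
   orbit form does not depend on the base point; comparing it at p + v and
   p - v with v = W.p gives (X W.p, Y.p) + (X.p, Y W.p) = 0. *)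

Lemma is_derive_uniq (R : numFieldType) (V W : normedModType R) (a v : V)
    (f : V -> W) (d1 d2 : W) :
  is_derive a v f d1 -> is_derive a v f d2 -> d1 = d2.
Proof.
by move=> h1 h2; rewrite -(@derive_val _ _ _ _ _ _ _ h1) (@derive_val _ _ _ _ _ _ _ h2).
Qed.

Lemma is_derive_cst_eq0 (R : numFieldType) (V W : normedModType R) (a v : V)
    (f : V -> W) (k d : W) :
  (forall x, f x = k) -> is_derive a v f d -> d = 0.
Proof.
move=> fk; have -> : f = cst k by apply: funext.
by move/is_derive_uniq; apply; apply: is_derive_cst.
Qed.

Section MatrixCurve.
Variable R : realType.

Definition mx_derive m k (c : R -> 'M[R]_(m, k)) (C : 'M[R]_(m, k)) :=
  forall i j, is_derive (0 : R) (1 : R) (fun t => c t i j) (C i j).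

Lemma mx_derive_uniq m k (c : R -> 'M[R]_(m, k)) C D :
  mx_derive c C -> mx_derive c D -> C = D.
Proof.
by move=> hC hD; apply/matrixP => i j; apply: is_derive_uniq (hC i j) (hD i j).
Qed.

Lemma mx_derive_cst m k (M : 'M[R]_(m, k)) : mx_derive (fun=> M) 0.
Proof. by move=> i j; rewrite mxE; apply: is_derive_cst. Qed.

Lemma mx_derive_cst_eq0 m k (c : R -> 'M[R]_(m, k)) M C :
  (forall t, c t = M) -> mx_derive c C -> C = 0.
Proof.
move=> cM; have -> : c = fun=> M by apply: funext.
by move/mx_derive_uniq; apply; apply: mx_derive_cst.
Qed.

Lemma mx_deriveM m k l (c : R -> 'M[R]_(m, k)) (d : R -> 'M[R]_(k, l)) C D :
  mx_derive c C -> mx_derive d D ->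
  mx_derive (fun t => c t *m d t) (C *m d 0 + c 0 *m D).
Proof.
move=> hc hd i j.
have -> : (fun t => (c t *m d t) i j) = \sum_(r < k) (fun t => c t i r * d t r j).
  by apply: funext => t; rewrite mxE fct_sumE.
apply: is_derive_eq; first by apply: is_derive_sum => r; apply: is_deriveM.
rewrite !mxE -big_split; apply: eq_bigr => r _ /=.
by rewrite /GRing.scale /= addrC [C i r * _]mulrC.
Qed.

Lemma mx_deriveMl m k l (M : 'M[R]_(m, k)) (d : R -> 'M[R]_(k, l)) D :
  mx_derive d D -> mx_derive (fun t => M *m d t) (M *m D).
Proof.
by move=> hd; have := mx_deriveM (mx_derive_cst M) hd; rewrite mul0mx add0r.
Qed.

Lemma mx_deriveMr m k l (c : R -> 'M[R]_(m, k)) (M : 'M[R]_(k, l)) C :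
  mx_derive c C -> mx_derive (fun t => c t *m M) (C *m M).
Proof.
by move=> hc; have := mx_deriveM hc (mx_derive_cst M); rewrite mulmx0 addr0.
Qed.

Lemma mx_deriveT m k (c : R -> 'M[R]_(m, k)) C :
  mx_derive c C -> mx_derive (fun t => (c t)^T) C^T.
Proof.
move=> hc i j; rewrite mxE.
by under eq_fun do rewrite mxE; apply: hc.
Qed.

Lemma mx_derive_mxsub m k m' k' (f : 'I_m' -> 'I_m) (g : 'I_k' -> 'I_k)
    (c : R -> 'M[R]_(m, k)) C :
  mx_derive c C -> mx_derive (fun t => mxsub f g (c t)) (mxsub f g C).
Proof.
move=> hc i j; rewrite mxE.
by under eq_fun do rewrite mxE; apply: hc.
Qed.

End MatrixCurve.

Section InnerProduct.
Variables (R : realType) (n s : nat).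
Local Notation ip := (@ip R n s).

Lemma ipC x y : ip x y = ip y x.
Proof.
rewrite /ip; set A := _ *m y.
by rewrite -[A]trmxK mxE /A !trmx_mul trmxK /eta_form tr_diag_mx mulmxA.
Qed.

Lemma ipDl x y z : ip (x + y) z = ip x z + ip y z.
Proof. by rewrite /ip linearD /= !mulmxDl mxE. Qed.

Lemma ipNl x y : ip (- x) y = - ip x y.
Proof. by rewrite /ip linearN /= !mulNmx mxE. Qed.

Lemma ipZl a x y : ip (a *: x) y = a * ip x y.
Proof. by rewrite /ip linearZ /= -!scalemxAl mxE. Qed.

Lemma ip0l x : ip 0 x = 0.
Proof. by rewrite -(scale0r 0) ipZl mul0r. Qed.

Lemma ipDr x y z : ip x (y + z) = ip x y + ip x z.
Proof. by rewrite ipC ipDl !(ipC x). Qed.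

Lemma ipNr x y : ip x (- y) = - ip x y.
Proof. by rewrite ipC ipNl ipC. Qed.

Lemma ip_eta_isometry (A : 'M[R]_n) x y :
  A^T *m eta_form n s *m A = eta_form n s -> ip (A *m x) (A *m y) = ip x y.
Proof. by move=> hA; rewrite /ip trmx_mul !mulmxA -(mulmxA _ A^T) -(mulmxA _ _ A) hA. Qed.

Lemma is_derive_ip (x y : R -> 'cV[R]_n) X Y :
  mx_derive x X -> mx_derive y Y ->
  is_derive (0 : R) (1 : R) (fun t => ip (x t) (y t)) (ip X (y 0) + ip (x 0) Y).
Proof.
move=> hx hy.
have := mx_deriveM (mx_deriveMr (eta_form n s) (mx_deriveT hx)) hy ord0 ord0.
by rewrite mxE.
Qed.

End InnerProduct.

Section AffineAction.
Variables (R : realType) (n s : nat).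
Implicit Types (M N : 'M[R]_(n + 1)) (x v : 'cV[R]_n).

Lemma usubmx_mul_col0 m1 m2 k1 k2 l (M : 'M[R]_(m1 + m2, k1 + k2))
    (u : 'M[R]_(k1, l)) :
  usubmx (M *m col_mx u 0) = ulsubmx M *m u.
Proof. by rewrite -{1}(submxK M) mul_block_col mulmx0 addr0 col_mxKu. Qed.

Lemma actD M N x : act (M + N) x = act M x + act N x.
Proof. by rewrite /act mulmxDl linearD. Qed.

Lemma actN M x : act (- M) x = - act M x.
Proof. by rewrite /act mulNmx linearN. Qed.

Lemma actZ a M x : act (a *: M) x = a *: act M x.
Proof. by rewrite /act -scalemxAl linearZ. Qed.

Lemma act0 x : act (0 : 'M[R]_(n + 1)) x = 0.
Proof. by rewrite /act mul0mx linear0. Qed.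

Lemma actDr M x v : act M (x + v) = act M x + ulsubmx M *m v.
Proof.
have extD : ext (x + v) = ext x + col_mx v 0 by rewrite /ext add_col_mx addr0.
by rewrite /act extD mulmxDr linearD; congr (_ + _); apply: usubmx_mul_col0.
Qed.

Lemma dsubmx_iso M : isIso n s M -> dsubmx M = row_mx 0 1%:M.
Proof. by case=> hdl hdr _; rewrite -[dsubmx M]hsubmxK; apply: congr2 hdl hdr. Qed.

Lemma ext_act_iso M x : isIso n s M -> ext (act M x) = M *m ext x.
Proof.
move=> hM; rewrite /act /ext -[RHS]vsubmxK -mul_dsub_mx dsubmx_iso //.
by rewrite mul_row_col mul0mx add0r mul1mx.
Qed.

Lemma orbit_formDl x X Y Z :
  orbit_form n s x (X + Y) Z = orbit_form n s x X Z + orbit_form n s x Y Z.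
Proof. by rewrite /orbit_form actD ipDl. Qed.

Lemma orbit_formZl a x X Y : orbit_form n s x (a *: X) Y = a * orbit_form n s x X Y.
Proof. by rewrite /orbit_form actZ ipZl. Qed.

Lemma orbit_form0l x Y : orbit_form n s x 0 Y = 0.
Proof. by rewrite /orbit_form act0 ip0l. Qed.

Lemma orbit_form0r x X : orbit_form n s x X 0 = 0.
Proof. by rewrite /orbit_form ipC act0 ip0l. Qed.

End AffineAction.

Section OrbitForm.
Variables (R : realType) (n s : nat) (G : 'M[R]_(n + 1) -> Prop).
Hypothesis G_iso : forall M, G M -> isIso n s M.
Local Notation g := (lie_alg G).

Lemma lie_alg_dsubmx U : g U -> dsubmx U = 0.
Proof.
case=> c [Gc _ hc]; rewrite dsubmxEsub.
apply: (mx_derive_cst_eq0 (M := row_mx 0 1%:M) _ (mx_derive_mxsub _ _ hc)) => t.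
by rewrite -dsubmxEsub; apply: dsubmx_iso (G_iso (Gc t)).
Qed.

Lemma lie_alg_mul_ext U x : g U -> U *m ext x = col_mx (act U x) 0.
Proof. by move=> gU; rewrite -[LHS]vsubmxK -mul_dsub_mx lie_alg_dsubmx // mul0mx. Qed.

Lemma act_mulmx_lie U V x : g V -> act (U *m V) x = ulsubmx U *m act V x.
Proof.
by move=> gV; rewrite [LHS]/act -mulmxA (lie_alg_mul_ext x gV); apply: usubmx_mul_col0.
Qed.

Lemma lie_alg_eta_skew U u v :
  g U -> ip n s (ulsubmx U *m u) v + ip n s u (ulsubmx U *m v) = 0.
Proof.
case=> c [Gc c0 hc].
have hA : mx_derive (fun t => ulsubmx (c t)) (ulsubmx U).
  by rewrite ulsubmxEsub; under eq_fun do rewrite ulsubmxEsub; apply: mx_derive_mxsub.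
have := is_derive_ip s (mx_deriveMr u hA) (mx_deriveMr v hA).
rewrite c0 [1%:M]scalar_mx_block block_mxKul !mul1mx.
apply: is_derive_cst_eq0 => t.
by apply: ip_eta_isometry; case: (G_iso (Gc t)).
Qed.

Lemma centralizer_lie_comm h U :
  (forall M, G M -> h *m M = M *m h) -> g U -> h *m U = U *m h.
Proof.
move=> hG [c [Gc _ hc]].
have hc_comm : (fun t => h *m c t) = fun t => c t *m h.
  by apply: funext => t; apply: hG.
by apply: (mx_derive_uniq (mx_deriveMl h hc)); rewrite hc_comm; apply: mx_deriveMr.
Qed.

Hypothesis G_transitive : centralizer_transitive n s G.

Lemma act_centralizer h X x :
  centralizer_Iso n s G h -> g X -> act X (act h x) = ulsubmx h *m act X x.
Proof.
case=> hI hG gX; rewrite [LHS]/act (ext_act_iso x hI) mulmxA.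
rewrite -(centralizer_lie_comm hG gX) -mulmxA lie_alg_mul_ext //.
exact: usubmx_mul_col0.
Qed.

Lemma orbit_form_indep x y X Y :
  g X -> g Y -> orbit_form n s y X Y = orbit_form n s x X Y.
Proof.
move=> gX gY; have [h [hC <-]] := G_transitive x y.
rewrite /orbit_form !act_centralizer //; apply: ip_eta_isometry.
by case: hC => -[].
Qed.

Lemma orbit_form_polar x v X Y :
  g X -> g Y ->
  ip n s (ulsubmx X *m v) (act Y x) + ip n s (act X x) (ulsubmx Y *m v) = 0.
Proof.
(* The forms at [x + v] and [x - v] agree; their difference is twice the left-hand side. *)
move=> gX gY; have := orbit_form_indep (x + v) (x - v) gX gY.
rewrite /orbit_form !actDr !mulmxN !ipDl !ipDr !ipNl !ipNr.
lra.
Qed.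

Lemma orbit_form_ad_invariant x W X Y :
  g W -> g X -> g Y ->
  orbit_form n s x (lie_br W X) Y + orbit_form n s x X (lie_br W Y) = 0.
Proof.
move=> gW gX gY.
have skew := lie_alg_eta_skew (act X x) (act Y x) gW.
have polar := orbit_form_polar x (act W x) gX gY.
rewrite /orbit_form /lie_br !actD !actN !act_mulmx_lie // ipDl ipDr ipNl ipNr.
lra.
Qed.

Lemma orbit_form_bracket_center x X Y Z :
  g X -> g Y -> center_alg g Z -> orbit_form n s x (lie_br X Y) Z = 0.
Proof.
move=> gX gY [gZ cZ].
by have := orbit_form_ad_invariant x gX gY gZ; rewrite cZ // orbit_form0r addr0.
Qed.

Lemma orbit_form_derived_center x Z Z' :
  derived_alg g Z -> center_alg g Z' -> orbit_form n s x Z Z' = 0.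
Proof.
case=> l [gl ->] cZ'.
rewrite (big_morph (orbit_form n s x ^~ Z') (fun X Y => orbit_formDl s x X Y Z')
  (orbit_form0l s x Z')).
apply: big1_seq => t /andP[_ /gl [gX gY]].
by rewrite orbit_formZl orbit_form_bracket_center // mulr0.
Qed.

End OrbitForm.

Theorem corollary4p8 (R : realType) (n s : nat) (G : 'M[R]_(n + 1) -> Prop)
  (p : 'cV[R]_n) (Z Zs : 'M[R]_(n + 1)) :
  (s <= n)%N ->
  zariski_closed_subgroup n s G ->
  centralizer_transitive n s G ->
  derived_alg (lie_alg G) Z ->
  lie_alg G Zs ->
  orbit_form n s p Z Zs != 0 ->
  ~ center_alg (lie_alg G) Zs.
Proof.
move=> _ [G_iso _ _ _ _] G_transitive gZ _ hZZs cZs.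
by rewrite (orbit_form_derived_center G_iso G_transitive p gZ cZs) eqxx in hZZs.
Qed.
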